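(* Let $q>3$ and $n\ge 1$. Suppose there exists a local permutation polynomial $f\in\mathbb{F}_q[x_1,\dots,x_n]$ of degree $n(q-2)$. Then, for every $1\le m\le n$, there exists a local permutation polynomial in $\mathbb{F}_q[x_1,\dots,x_m]$ of degree $m(q-2)$.
   Context: $\mathbb{F}_q$ is the finite field with $q$ elements. A polynomial $f\in\mathbb{F}_q[x_1,\dots,x_n]$ is a local permutation polynomial (LPP) if, for each $i$ and each choice of the other coordinates $(a_j)_{j\ne i}\in\mathbb{F}_q^{n-1}$, the univariate polynomial obtained by fixing $x_j=a_j$ for $j\ne i$ induces a bijection of $\mathbb{F}_q$. Polynomials are reduced (degree $<q$ in each variable), and degree means total degree. For $q>3$ any LPP in $n$ variables has degree at most $n(q-2)$, which is the ''maximum degree''. *)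

From mathcomp Require Import all_boot all_algebra all_field.
From mathcomp Require Import mpoly.
Set Implicit Arguments. Unset Strict Implicit. Unset Printing Implicit Defensive.
Import GRing.Theory.
Local Open Scope ring_scope.

Definition reduced (F : finFieldType) (n : nat) (p : {mpoly F[n]}) : Prop :=
  forall m, m \in msupp p -> forall i : 'I_n, (m i < #|F|)%N.

Definition is_LPP (F : finFieldType) (n : nat) (p : {mpoly F[n]}) : Prop :=
  forall (i : 'I_n) (a : 'I_n -> F),
    bijective (fun t : F => p.@[fun j => if j == i then t else a j]).

(* total degree of p (degree of 0 taken to be 0; irrelevant here) *)
Definition tdeg (F : finFieldType) (n : nat) (p : {mpoly F[n]}) : nat :=
  (msize p).-1.

From mathcomp Require Import all_boot all_algebra all_field.
From mathcomp Require Import mpoly.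
From mathcomp Require Import zify.

(* Let F be a finite field with q elements and c = q - 2.
   1. Power sums: \sum_t t^e = -[e = q-1] for e < 2(q-1).  With the weights
      w_0(t) = [t = 0] and w_e(t) = t^(q-1-e) (e > 0) this gives the orthogonality
      \sum_t t^a w_e(t) = +-[a = e] for a, e < q, hence for a reduced polynomial p
      in k variables the coefficient extraction formula
          \sum_(x in F^k) p(x) \prod_i w_(M i)(x i) = +- p@_M.
   2. For a local permutation polynomial p no monomial has an exponent q-1: the
      extraction sum of such a monomial contains, in that coordinate, the sum of
      the values of a permutation of F, which is \sum_t t = 0.  So deg p <= k c,
      with equality iff p has a nonzero coefficient at (c, ..., c).
   3. Fixing the last n-m variables of f at a point a gives a reduced LPP in m
      variables; splitting the extraction sum over F^n = F^m x F^(n-m) shows that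
      if f@_M != 0, some specialization has a nonzero coefficient at the
      truncation of M.
   The theorem follows by applying 3 to M = (c, ..., c), with 2 on both ends. *)

Set Implicit Arguments. Unset Strict Implicit. Unset Printing Implicit Defensive.
Import GRing.Theory.
Local Open Scope ring_scope.

Section PowerSums.

Variable F : finFieldType.
Local Notation q := #|F|.

(* The characteristic of F divides q: summing the translation t |-> t + 1. *)
Lemma natr_card : q%:R = 0 :> F.
Proof.
have h : \sum_(t : F) t = \sum_(t : F) (t + 1) := reindex_inj (addIr 1).
move: h; rewrite big_split /= sumr_const -[LHS]addr0 => /addrI h.
exact: esym h.
Qed.

Lemma expf_card_pred (x : F) : x != 0 -> x ^+ q.-1 = 1.
Proof.
move=> nx; apply: (mulIf nx); rewrite mul1r -exprSr prednK ?expf_card //.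
exact: ltnW (finNzRing_gt1 F).
Qed.

(* For 0 < e < q - 1 the polynomial X^e - 1 has fewer than q - 1 roots. *)
Lemma exists_non_unity_root (e : nat) :
  (0 < e)%N -> (e < q.-1)%N -> exists2 c : F, c != 0 & c ^+ e != 1.
Proof.
move=> e0 lt_e; have [c /andP[c0 ce] | all_roots] :=
  pickP (fun c : F => (c != 0) && (c ^+ e != 1)); first by exists c.
suff : (q.-1 <= e)%N by rewrite leqNgt lt_e.
rewrite -(cardC1 (0 : F)) cardE; apply: max_unity_roots e0 _ (enum_uniq _).
apply/allP => x; rewrite mem_enum unity_rootE inE => x0.
by move: (all_roots x); rewrite /= x0 => /negbFE.
Qed.

(* Power sums vanish for 0 < e < q - 1: scale by a non-root c of X^e - 1. *)
Lemma sum_expr_eq0 (e : nat) :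
  (0 < e)%N -> (e < q.-1)%N -> \sum_(t : F) t ^+ e = 0.
Proof.
move=> e0 lt_e; have [c c0 ce] := exists_non_unity_root e0 lt_e.
have : \sum_(t : F) t ^+ e = \sum_(t : F) (c * t) ^+ e := reindex_inj (mulfI c0).
under [in RHS]eq_bigr => t _ do rewrite exprMn.
rewrite -mulr_sumr => /eqP; rewrite -subr_eq0 -{1}[\sum_t _]mul1r -mulrBl.
by rewrite mulf_eq0 subr_eq0 eq_sym (negbTE ce) => /eqP.
Qed.

Lemma sum_expr (e : nat) : (e < q.-1.*2)%N ->
  \sum_(t : F) t ^+ e = if e == q.-1 then -1 else 0.
Proof.
move=> lt_e; have q1 := finNzRing_gt1 F.
case: (ltngtP e q.-1) => [lt | gt | ->].
- case: e lt {lt_e} => [|e] lt; last exact: sum_expr_eq0.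
  rewrite (eq_bigr (fun _ => 1)) => [|t _]; last by rewrite expr0.
  by rewrite sumr_const natr_card.
- have reduce (t : F) : t ^+ e = t ^+ (e - q.-1).
    have [->|t0] := eqVneq t 0; last first.
      by rewrite -{1}(subnK (ltnW gt)) exprD expf_card_pred // mulr1.
    by rewrite !expr0n; congr (nat_of_bool _)%:R; apply/eqP/eqP; lia.
  under eq_bigr => t _ do rewrite reduce.
  by apply: sum_expr_eq0; lia.
- have qm1 : q.-1%:R = -1 :> F.
    by apply/eqP; rewrite -subr_eq0 opprK -(natrD _ _ 1) addn1 prednK ?natr_card // ltnW.
  rewrite (bigD1 0) //= expr0n (_ : q.-1 == 0 = false)%N; last by lia.
  rewrite add0r (eq_bigr (fun _ => 1)) ?sumr_const ?cardC1 ?qm1 //.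
  by move=> t /expf_card_pred.
Qed.

Definition coef_weight (e : nat) (t : F) : F :=
  if e == 0%N then (t == 0)%:R else t ^+ (q.-1 - e).
Definition coef_sign (e : nat) : F := if e == 0%N then 1 else -1.

(* The sign is a unit, so the extraction formula determines p@_M. *)
Lemma coef_sign_neq0 (e : nat) : coef_sign e != 0.
Proof. by rewrite /coef_sign; case: ifP; rewrite ?oppr_eq0 oner_eq0. Qed.

Lemma sum_expr_weight (a e : nat) : (a < q)%N -> (e < q)%N ->
  \sum_(t : F) t ^+ a * coef_weight e t = coef_sign e * (a == e)%:R.
Proof.
move=> lt_a lt_e; rewrite /coef_weight /coef_sign; case: eqP => [->|/eqP e0].
  rewrite mul1r (bigD1 0) //= big1 ?addr0; first by rewrite eqxx mulr1 expr0n.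
  by move=> t /negbTE ->; rewrite mulr0.
under eq_bigr => t _ do rewrite -exprD.
have q1 := finNzRing_gt1 F.
rewrite sum_expr; last by lia.
have -> : ((a + (q.-1 - e))%N == q.-1) = (a == e) by apply/eqP/eqP; lia.
by case: eqP; rewrite ?mulr1 ?mulr0.
Qed.

End PowerSums.

Lemma sum_by_fibers (R : nmodType) (I J K : finType) (comb : J -> K -> I)
    (P : pred J) (split : I -> J * K) (G : I -> R) :
  (forall y, P (split y).1) -> (forall y, comb (split y).1 (split y).2 = y) ->
  (forall a x, P a -> split (comb a x) = (a, x)) ->
  \sum_y G y = \sum_(a | P a) \sum_x G (comb a x).
Proof.
move=> splitP combK splitK; rewrite pair_big_dep.
rewrite (reindex_onto split (fun p => comb p.1 p.2)); last first.
  by case=> a x /andP[Pa _] /=; rewrite splitK.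
by apply: eq_big => y; rewrite combK // splitP eqxx.
Qed.

Section CoefficientExtraction.

Variables (F : finFieldType) (k : nat).
Implicit Types (p : {mpoly F[k]}) (m M : 'X_{1..k}).

Lemma prod_eq_mnm m M : \prod_(i < k) ((m i == M i)%:R : F) = (m == M)%:R.
Proof.
have [->|neq] := eqVneq m M; first by rewrite big1 // => i _; rewrite eqxx.
have [i /= mi] : exists i, m i != M i.
  apply/existsP; apply: contraNT neq; rewrite negb_exists => /forallP eqmM.
  by apply/eqP/mnmP => i; apply/eqP/negbNE/eqmM.
by rewrite (bigD1 i) //= (negbTE mi) mul0r.
Qed.

Lemma mcoeff_sum_msupp p M : p@_M = \sum_(m <- msupp p) p@_m * (m == M)%:R.
Proof.
rewrite {1}[p]mpolyE raddf_sum /=.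
by apply: eq_bigr => m _; rewrite mcoeffZ mcoeffX.
Qed.

Lemma coef_char_sum p M : reduced p -> (forall i, M i < #|F|)%N ->
  \sum_(x : {ffun 'I_k -> F}) p.@[x] * \prod_i coef_weight (M i) (x i)
    = (\prod_i coef_sign F (M i)) * p@_M.
Proof.
move=> red lt_M.
under [in LHS]eq_bigr => x _ do rewrite mevalE mulr_suml.
rewrite exchange_big /= mcoeff_sum_msupp mulr_sumr big_seq [RHS]big_seq.
apply: eq_bigr => m supp_m.
under eq_bigr => x _ do rewrite -mulrA -big_split.
rewrite -mulr_sumr mulrCA; congr (_ * _).
rewrite -(bigA_distr_bigA (fun i t => t ^+ m i * coef_weight (M i) t)) /=.
have lt_m := red _ supp_m.
under eq_bigr => i _ do rewrite sum_expr_weight ?lt_m ?lt_M //.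
by rewrite big_split /= prod_eq_mnm.
Qed.

End CoefficientExtraction.

Lemma mdeg_const (k c : nat) : mdeg [multinom c | _ < k] = (k * c)%N.
Proof.
rewrite mdegE (eq_bigr (fun _ => c)) ?sum_nat_const ?card_ord // => i _.
by rewrite mnmE.
Qed.

Section LocalPermutationPolynomials.

Variables (F : finFieldType) (k : nat).
Hypothesis q_gt2 : (2 < #|F|)%N.
Local Notation c := (#|F| - 2)%N.
Implicit Types (p : {mpoly F[k]}).

Definition upd (a : {ffun 'I_k -> F}) (i : 'I_k) (t : F) : {ffun 'I_k -> F} :=
  [ffun j => if j == i then t else a j].

Lemma sum_along (R : nmodType) (i : 'I_k) (G : {ffun 'I_k -> F} -> R) :
  \sum_y G y = \sum_(a : {ffun 'I_k -> F} | a i == 0) \sum_(t : F) G (upd a i t).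
Proof.
apply: (sum_by_fibers (split := fun y => (upd y i 0, y i))) => [y|y|a t /eqP ai].
- by rewrite ffunE eqxx.
- by apply/ffunP => j; rewrite !ffunE; case: eqP => // ->.
- congr (_, _); rewrite ?ffunE ?eqxx //.
  by apply/ffunP => j; rewrite !ffunE; case: eqP => // ->.
Qed.

(* Summing the values of a permutation of F gives \sum_t t = 0. *)
Lemma lpp_sum_line p (i : 'I_k) (a : {ffun 'I_k -> F}) :
  is_LPP p -> \sum_(t : F) p.@[upd a i t] = 0.
Proof.
move=> lpp; rewrite -[RHS](@sum_expr_eq0 _ 1) //; last by lia.
rewrite [RHS](reindex _ (onW_bij _ (lpp i a))); apply: eq_bigr => t _.
by rewrite expr1; apply: meval_eq => j; rewrite ffunE.
Qed.

Lemma lpp_exponent_lt p : reduced p -> is_LPP p ->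
  forall m, m \in msupp p -> forall i, (m i <= c)%N.
Proof.
move=> red lpp m supp_m i; have := red m supp_m i.
have [mi _|mi lt_mi] := eqVneq (m i) #|F|.-1; last by lia.
have := coef_char_sum red (red m supp_m).
rewrite (sum_along i) big1 => [/esym/eqP|a _].
  rewrite mulf_eq0 mcoeff_eq0 supp_m orbF prodf_seq_eq0.
  by case/hasP => j _; rewrite (negbTE (coef_sign_neq0 _ _)).
have weight_i (t : F) : coef_weight (m i) t = 1.
  by rewrite /coef_weight mi ifF ?subnn ?expr0 //; lia.
under eq_bigr => t _ do rewrite (bigD1 i) //= ffunE eqxx weight_i mul1r.
rewrite (eq_bigr (fun t => p.@[upd a i t] *
           \prod_(j < k | j != i) coef_weight (m j) (a j))).
  by rewrite -mulr_suml lpp_sum_line // mul0r.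
by move=> t _; congr (_ * _); apply: eq_bigr => j /negbTE ji; rewrite ffunE ji.
Qed.

Lemma lpp_msize_le p : reduced p -> is_LPP p -> (msize p <= (k * c).+1)%N.
Proof.
move=> red lpp; rewrite msizeE; apply/bigmax_leqP_seq => m supp_m _.
rewrite ltnS mdegE (@leq_trans (\sum_(i < k) c)%N) //.
  by apply: leq_sum => i _; apply: lpp_exponent_lt supp_m i.
by rewrite sum_nat_const card_ord.
Qed.

Lemma mnm_eq_const (m : 'X_{1..k}) :
  (forall i, m i <= c)%N -> mdeg m = (k * c)%N -> m = [multinom c | _ < k].
Proof.
move=> le_m deg_m.
have : (\sum_(i < k) m i + \sum_(i < k) (c - m i) = k * c)%N.
  rewrite -big_split /= (eq_bigr (fun _ => c)) ?sum_nat_const ?card_ord // => i _.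
  exact: subnKC.
rewrite -mdegE deg_m => /eqP; rewrite -[X in _ == X]addn0 eqn_add2l sum_nat_eq0.
move=> /forallP vanish; apply/mnmP => i; rewrite mnmE.
by have := vanish i; have := le_m i; rewrite /= subn_eq0; lia.
Qed.

Lemma lpp_tdeg_max p : (0 < k)%N -> reduced p -> is_LPP p ->
  tdeg p = (k * c)%N <-> p@_[multinom c | _ < k] != 0.
Proof.
move=> k0 red lpp; have kc0 : (0 < k * c)%N by rewrite muln_gt0 k0; lia.
have size_le := lpp_msize_le red lpp; rewrite /tdeg; split => [deg_p|top_p].
  have p0 : p != 0 by apply: contraPneq deg_p => ->; rewrite msize0; lia.
  have size_p : msize p = (k * c).+1 by lia.
  have := mlead_deg p0; rewrite size_p => -[/mnm_eq_const <-].
    by rewrite mleadc_eq0.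
  exact: lpp_exponent_lt (mlead_supp p0).
rewrite -mcoeff_msupp in top_p.
by have := msize_mdeg_lt top_p; rewrite mdeg_const; lia.
Qed.

End LocalPermutationPolynomials.

Section Specialization.

Variables (F : finFieldType) (m n : nat).
Hypothesis le_mn : (m <= n)%N.
Implicit Types (f : {mpoly F[n]}) (x : 'I_m -> F) (a : 'I_n -> F).

(* The point of F^n whose first m coordinates are x and the others those of a. *)
Definition glue x a (j : 'I_n) : F := oapp x (a j) (insub (val j)).

Lemma glue_widen x a (i : 'I_m) : glue x a (widen_ord le_mn i) = x i.
Proof. by rewrite /glue insubT //= => lt_im; congr (x _); apply: val_inj. Qed.

Lemma glue_tail x a (j : 'I_n) : ~~ (j < m)%N -> glue x a j = a j.
Proof. by move=> ge_jm; rewrite /glue insubF //; apply/negbTE. Qed.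

Lemma prod_split_head (R : comPzSemiRingType) (h : 'I_n -> R) :
  \prod_(j < n) h j
    = \prod_(i < m) h (widen_ord le_mn i) * \prod_(j < n | ~~ (j < m)%N) h j.
Proof.
rewrite (bigID (fun j : 'I_n => (j < m)%N)) /=; congr (_ * _).
by rewrite (big_ord_narrow_cond (P := xpredT)).
Qed.

Definition mtrunc (M : 'X_{1..n}) : 'X_{1..m} :=
  [multinom M (widen_ord le_mn i) | i < m].

Lemma mtrunc_const (c : nat) : mtrunc [multinom c | _ < n] = [multinom c | _ < m].
Proof. by apply/mnmP => i; rewrite !mnmE. Qed.

(* f with the variables x_j, j >= m, fixed to a j. *)
Definition specialize_tail a f : {mpoly F[m]} :=
  \sum_(M <- msupp f)
     (f@_M * \prod_(j < n | ~~ (j < m)%N) a j ^+ M j) *: 'X_[mtrunc M].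

Lemma specialize_meval a f x : (specialize_tail a f).@[x] = f.@[glue x a].
Proof.
rewrite raddf_sum /= mevalE; apply: eq_bigr => M _.
rewrite mevalZ mevalX prod_split_head mulrAC -mulrA; congr (_ * (_ * _)).
  by apply: eq_bigr => i _; rewrite glue_widen mnmE.
by apply: eq_bigr => j /glue_tail ->.
Qed.

(* Specialization preserves reducedness: its monomials are truncations of
   monomials of f. *)
Lemma specialize_reduced a f : reduced f -> reduced (specialize_tail a f).
Proof.
move=> red M'; rewrite mcoeff_msupp raddf_sum /= => nz_M' i.
have [M supp_M /eqP <-] : exists2 M, M \in msupp f & mtrunc M == M'.
  apply/hasP; apply: contraNT nz_M' => /hasPn none.
  rewrite big1_seq // => M /andP[_ /none].
  by rewrite mcoeffZ mcoeffX => /negbTE ->; rewrite mulr0.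
by rewrite mnmE red.
Qed.

(* Specialization preserves the local permutation property: its univariate
   sections are sections of f. *)
Lemma specialize_LPP a f : is_LPP f -> is_LPP (specialize_tail a f).
Proof.
move=> lpp i b; apply: (eq_bij (lpp (widen_ord le_mn i) (glue b a))) => t /=.
rewrite specialize_meval; apply: meval_eq => j.
rewrite /glue; case: insubP => [u _ val_u|ge_jm] /=.
  by rewrite -val_eqE /= -val_u val_eqE.
by rewrite ifF //; apply: contraNF ge_jm => /eqP ->; rewrite /= ltn_ord.
Qed.

(* Fubini for F^n = F^m x F^(n-m): the tail a is normalized to vanish on the
   first m coordinates. *)
Lemma sum_glue (R : nmodType) (G : {ffun 'I_n -> F} -> R) :
  \sum_y G y =
    \sum_(a : {ffun 'I_n -> F} | [forall i, a (widen_ord le_mn i) == 0])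
      \sum_(x : {ffun 'I_m -> F}) G [ffun j => glue x a j].
Proof.
pose head (y : {ffun 'I_n -> F}) := [ffun i : 'I_m => y (widen_ord le_mn i)].
pose tail (y : {ffun 'I_n -> F}) := [ffun j : 'I_n => if (j < m)%N then 0 else y j].
apply: (sum_by_fibers (split := fun y => (tail y, head y))
          (comb := fun (a : {ffun 'I_n -> F}) (x : {ffun 'I_m -> F}) =>
                     [ffun j => glue x a j])) => [y|y|a x /forallP a0].
- by apply/forallP => i; rewrite ffunE /= ltn_ord.
- apply/ffunP => j; rewrite !ffunE /glue; case: insubP => [u _ val_u|ge_jm] /=.
    by rewrite ffunE; congr (y _); apply: val_inj.
  by rewrite ffunE (negbTE ge_jm).
congr (_, _); apply/ffunP => j; rewrite !ffunE ?glue_widen //.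
case: (ltnP j m) => [lt_jm|ge_jm]; last by rewrite glue_tail // -leqNgt.
by have /eqP <- := a0 (Ordinal lt_jm); congr (a _); apply: val_inj.
Qed.

Lemma weight_glue (M : 'X_{1..n}) x a :
  \prod_j coef_weight (M j) (glue x a j)
    = \prod_i coef_weight (mtrunc M i) (x i)
      * \prod_(j < n | ~~ (j < m)%N) coef_weight (M j) (a j).
Proof.
rewrite prod_split_head; congr (_ * _).
  by apply: eq_bigr => i _; rewrite glue_widen mnmE.
by apply: eq_bigr => j /glue_tail ->.
Qed.

(* If f@_M != 0, some specialization of the tail keeps the truncation of M in
   its support: otherwise the extraction sum of f@_M would vanish fiberwise. *)
Lemma specialize_coef_nonzero f (M : 'X_{1..n}) :
  reduced f -> (forall j, M j < #|F|)%N -> f@_M != 0 ->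
  exists a, (specialize_tail a f)@_(mtrunc M) != 0.
Proof.
move=> red lt_M nz_M.
have [a nz_a|vanish] :=
  pickP (fun a : {ffun 'I_n -> F} => (specialize_tail a f)@_(mtrunc M) != 0).
  by exists a.
have := coef_char_sum red lt_M; rewrite sum_glue big1 => [/esym/eqP|a _].
  rewrite mulf_eq0 (negbTE nz_M) orbF prodf_seq_eq0 => /hasP[j _].
  by rewrite (negbTE (coef_sign_neq0 _ _)).
have lt_tM i : (mtrunc M i < #|F|)%N by rewrite mnmE.
under eq_bigr => x _.
  rewrite (meval_eq _ (fun j => ffunE _ j)) -specialize_meval.
  under eq_bigr => j _ do rewrite ffunE.
  rewrite weight_glue mulrA.
  over.
rewrite -mulr_suml (coef_char_sum (specialize_reduced (a := a) red) lt_tM).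
by move: (vanish a) => /negbFE /eqP ->; rewrite mulr0 mul0r.
Qed.

End Specialization.

Theorem mainTheorem10 (F : finFieldType) (n : nat) :
  (3 < #|F|)%N -> (1 <= n)%N ->
  (exists f : {mpoly F[n]},
      reduced f /\ is_LPP f /\ tdeg f = (n * (#|F| - 2))%N) ->
  forall m : nat, (1 <= m)%N -> (m <= n)%N ->
    exists g : {mpoly F[m]},
      reduced g /\ is_LPP g /\ tdeg g = (m * (#|F| - 2))%N.
Proof.
move=> q_gt3 n_gt0 [f [red [lpp deg_f]]] m m_gt0 le_mn.
have q_gt2 : (2 < #|F|)%N by lia.
have top_f := (lpp_tdeg_max q_gt2 n_gt0 red lpp).1 deg_f.
have lt_top j : ([multinom (#|F| - 2) | _ < n] j < #|F|)%N by rewrite mnmE; lia.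
have [a] := specialize_coef_nonzero le_mn red lt_top top_f.
rewrite mtrunc_const => top_g.
pose g := specialize_tail le_mn a f.
have red_g : reduced g := specialize_reduced red.
have lpp_g : is_LPP g := specialize_LPP le_mn a lpp.
exists g; do 2!split => //.
exact: (lpp_tdeg_max q_gt2 m_gt0 red_g lpp_g).2.
Qed.
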